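(* Let $r$ be a positive real number such that $1, r, r^2, r^3$ are linearly independent over $\mathbb{Q}$, and let $\Lambda \subset \mathbb{C}^2$ be the lattice generated by the column vectors of the period matrix $$P = \begin{pmatrix} 1 & 0 & \sqrt{-1}\,r^3 & r \\ 0 & 1 & r & \sqrt{-1} \end{pmatrix}.$$ Then the $2$-dimensional complex torus $\mathbb{A} = \mathbb{C}^2/\Lambda$ is a simple abelian variety.
   Context: An abelian variety is a complex torus admitting a positive line bundle (equivalently a polarization). An abelian variety is simple if it contains no complex subtorus other than $0$ and itself; for a $2$-dimensional torus this means it contains no $1$-dimensional complex subtorus. *)

From HB Require Import structures.
From mathcomp Require Import all_boot all_order all_algebra.
From mathcomp Require Import complex.
From mathcomp Require Import reals.
Set Implicit Arguments. Unset Strict Implicit. Unset Printing Implicit Defensive.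
Import Order.TTheory GRing.Theory Num.Theory.
Local Open Scope ring_scope.
Local Open Scope complex_scope.

Definition period_matrix (R : realType) (r : R) : 'M[R[i]]_(2, 4) :=
  \matrix_(i < 2, j < 4)
    [fun k : 'I_4 =>
       if i == 0 :> nat then
         [:: 1; 0; 'i * (r ^+ 3)%:C; r%:C]`_k
       else
         [:: 0; 1; r%:C; 'i]`_k] j.

Definition in_lattice (R : realType) (n : nat) (P : 'M[R[i]]_(2, n))
    (v : 'cV[R[i]]_2) : Prop :=
  exists k : 'I_n -> int, v = \sum_(j < n) (k j)%:~R *: col j P.

(* The columns of P are linearly independent over R, so that Lambda is a
   lattice (discrete, of full rank 2n = 4 in C^2 = R^4) and C^2/Lambda is
   a complex torus. *)
Definition columns_R_independent (R : realType) (n : nat)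
    (P : 'M[R[i]]_(2, n)) : Prop :=
  forall t : 'I_n -> R,
    \sum_(j < n) (t j)%:C *: col j P = 0 -> forall j, t j = 0.

Definition herm_form (R : realType) (H : 'M[R[i]]_2) (v w : 'cV[R[i]]_2)
  : R[i] :=
  \sum_(a < 2) \sum_(b < 2) ((v a 0)^* * H a b * w b 0).

(* A polarization (Riemann form) on C^2/Lambda: a positive definite Hermitian
   form H whose imaginary part takes integer values on Lambda x Lambda.
   This is the first Chern class of a positive (ample) line bundle
   (Appell-Humbert); its existence is equivalent to the torus admitting a
   positive line bundle. *)
Definition has_polarization (R : realType) (n : nat) (P : 'M[R[i]]_(2, n))
  : Prop :=
  exists H : 'M[R[i]]_2,
    (forall a b, H b a = (H a b)^*) /\
    (forall v : 'cV[R[i]]_2, v != 0 -> 0 < herm_form H v v) /\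
    (forall l m : 'cV[R[i]]_2, in_lattice P l -> in_lattice P m ->
       exists z : int, Im (herm_form H l m) = z%:~R).

(* C^2/Lambda contains a 1-dimensional complex subtorus: there is a complex
   line C w (w <> 0) such that (C w) /\ Lambda contains two R-linearly
   independent vectors, i.e. (C w) /\ Lambda is a lattice in C w and
   (C w)/((C w) /\ Lambda) is a closed 1-dimensional complex subtorus. *)
Definition has_1dim_subtorus (R : realType) (n : nat) (P : 'M[R[i]]_(2, n))
  : Prop :=
  exists (w : 'cV[R[i]]_2) (a b : R[i]),
    w != 0 /\ in_lattice P (a *: w) /\ in_lattice P (b *: w) /\
    (forall s t : R, s%:C * a + t%:C * b = 0 -> s = 0 /\ t = 0).

(* C^2/Lambda is a simple abelian variety (of dimension 2): it is a complex
   torus (Lambda a lattice), it admits a polarization, and it contains no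
   complex subtorus other than 0 and itself (for dimension 2: no
   1-dimensional complex subtorus). *)
Definition simple_abelian_surface (R : realType) (P : 'M[R[i]]_(2, 4))
  : Prop :=
  columns_R_independent P /\ has_polarization P /\ ~ has_1dim_subtorus P.

From HB Require Import structures.
From mathcomp Require Import all_boot all_order all_algebra.
From mathcomp Require Import complex.
From mathcomp Require Import reals.
From mathcomp Require Import ring lra.
Set Implicit Arguments. Unset Strict Implicit. Unset Printing Implicit Defensive.
Import Order.TTheory GRing.Theory Num.Theory.
Local Open Scope ring_scope.
Local Open Scope complex_scope.

(* Over R the columns of P span C^2, and H = diag(r^-3, 1) is a positive
   Hermitian form whose imaginary part on the lattice is the unimodular
   symplectic form x0 y2 - x2 y0 + x1 y3 - x3 y1, so C^2/Lambda is principally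
   polarized.  A 1-dimensional subtorus would give two lattice vectors with
   R-independent integer coordinates k, n that are C-proportional.  The real
   and imaginary parts of their 2x2 determinant are integer polynomials of
   degree 3 in r whose coefficients are the Pluecker coordinates p_ij of
   k /\ n; linear independence of 1, r, r^2, r^3 kills p01, p03, p12, p23 and
   p02 - p13, and the Pluecker relation p02 p13 = p01 p23 + p03 p12 then kills
   p02 = p13.  Hence k and n are proportional, a contradiction. *)

Notation o0 := (ord0 : 'I_4).
Notation o1 := (lift ord0 ord0 : 'I_4).
Notation o2 := (lift ord0 (lift ord0 ord0) : 'I_4).
Notation o3 := (lift ord0 (lift ord0 (lift ord0 ord0)) : 'I_4).

Lemma forall_ord4 (P : 'I_4 -> Prop) :
  P o0 -> P o1 -> P o2 -> P o3 -> forall j, P j.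
Proof.
move=> P0 P1 P2 P3 [[|[|[|[|j]]]] lt_j4] //.
- by rewrite (_ : Ordinal lt_j4 = o0) //; apply: val_inj.
- by rewrite (_ : Ordinal lt_j4 = o1) //; apply: val_inj.
- by rewrite (_ : Ordinal lt_j4 = o2) //; apply: val_inj.
- by rewrite (_ : Ordinal lt_j4 = o3) //; apply: val_inj.
Qed.

Section Minors.
Variables (F : comPzRingType) (I : Type).
Implicit Types (k n : I -> F).

Definition minor2 k n (i j : I) : F := k i * n j - k j * n i.

Lemma minor2ii k n i : minor2 k n i i = 0.
Proof. exact: subrr. Qed.

Lemma minor2C k n i j : minor2 k n j i = - minor2 k n i j.
Proof. by rewrite /minor2 opprB. Qed.

Lemma minor2_plucker k n a b c d :
  minor2 k n a c * minor2 k n b d =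
  minor2 k n a b * minor2 k n c d + minor2 k n a d * minor2 k n b c.
Proof. rewrite /minor2; ring. Qed.

End Minors.

Lemma minor2_intr (F : comPzRingType) (I : Type) (k n : I -> int) i j :
  minor2 (fun l => (k l)%:~R : F) (fun l => (n l)%:~R) i j = (minor2 k n i j)%:~R.
Proof. by rewrite /minor2 intrB !intrM. Qed.

Lemma minor2_eq0_dependent (F : fieldType) (I : finType) (k n : I -> F) :
    (forall i j, minor2 k n i j = 0) ->
  exists s t : F, (s, t) != (0, 0) /\ forall l, s * k l + t * n l = 0.
Proof.
move=> minor_eq0; case: (pickP (fun j => k j != 0)) => [j kj_neq0 | k_eq0].
  exists (n j), (- k j); split.
    by rewrite xpair_eqE oppr_eq0 negb_and kj_neq0 orbT.
  by move=> l; rewrite -(minor_eq0 l j) /minor2 mulNr mulrC.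
exists 1, 0; split; first by rewrite xpair_eqE oner_eq0.
by move=> l; move/negbFE/eqP: (k_eq0 l) => ->; rewrite mulr0 mul0r addr0.
Qed.

Section PeriodLattice.
Variables (R : realType) (r : R).

Definition lattice_vec (c : 'I_4 -> R) : 'cV[R[i]]_2 :=
  \sum_(j < 4) (c j)%:C *: col j (period_matrix r).

Lemma lattice_vec_int (k : 'I_4 -> int) :
  lattice_vec (fun j => (k j)%:~R) =
  \sum_(j < 4) (k j)%:~R *: col j (period_matrix r).
Proof. by apply: eq_bigr => j _; rewrite rmorph_int. Qed.

Lemma lattice_vec_coord0 c :
  lattice_vec c 0 0 = (c o0 + c o3 * r) +i* (c o2 * r ^+ 3).
Proof.
rewrite /lattice_vec summxE !big_ord_recl big_ord0 !mxE /=.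
by apply/eqP; rewrite eq_complex /=; apply/andP; split; apply/eqP; ring.
Qed.

Lemma lattice_vec_coord1 c : lattice_vec c 1 0 = (c o1 + c o2 * r) +i* c o3.
Proof.
rewrite /lattice_vec summxE !big_ord_recl big_ord0 !mxE /=.
by apply/eqP; rewrite eq_complex /=; apply/andP; split; apply/eqP; ring.
Qed.

Lemma lattice_vec_relation (s t : R) c d :
    (forall j, s * c j + t * d j = 0) ->
  s%:C *: lattice_vec c + t%:C *: lattice_vec d = 0.
Proof.
move=> rel; rewrite /lattice_vec !scaler_sumr -big_split /= big1 // => j _.
by rewrite !scalerA -scalerDl -!rmorphM -rmorphD rel scale0r.
Qed.

Lemma lattice_vec_cross c d :
  lattice_vec c 0 0 * lattice_vec d 1 0 - lattice_vec c 1 0 * lattice_vec d 0 0 =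
  (minor2 c d o0 o1 + (minor2 c d o0 o2 - minor2 c d o1 o3) * r
     - minor2 c d o2 o3 * r ^+ 2 - minor2 c d o2 o3 * r ^+ 3)
  +i* (minor2 c d o0 o3 - minor2 c d o1 o2 * r ^+ 3).
Proof.
rewrite !lattice_vec_coord0 !lattice_vec_coord1 /minor2.
by apply/eqP; rewrite eq_complex /=; apply/andP; split; apply/eqP; ring.
Qed.

End PeriodLattice.

Section PositiveParameter.
Variables (R : realType) (r : R).
Hypothesis r_gt0 : 0 < r.

Lemma period_matrix_columns_R_independent : columns_R_independent (period_matrix r).
Proof.
move=> c c_eq0; change (lattice_vec r c = 0) in c_eq0.
have := lattice_vec_coord0 r c; have := lattice_vec_coord1 r c.
rewrite c_eq0 !mxE => /eqP; rewrite eq_complex /= => /andP[/eqP c12 /eqP c3].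
move=> /eqP; rewrite eq_complex /= => /andP[/eqP c03 /eqP /esym/eqP].
rewrite mulf_eq0 expf_eq0 (gt_eqF r_gt0) orbF => /eqP c2.
rewrite -c3 c2 !mul0r !addr0 in c12 c03.
by apply: forall_ord4; lra.
Qed.

Definition riemann_form : 'M[R[i]]_2 :=
  \matrix_(a, b) (if a == b then if a == 0 then r ^- 3 else 1 else 0)%:C.

Lemma herm_riemann_formE v w :
  herm_form riemann_form v w = (r ^- 3)%:C * ((v 0 0)^* * w 0 0) + (v 1 0)^* * w 1 0.
Proof.
rewrite /herm_form !big_ord_recl !big_ord0 !mxE /= !rmorph0 !rmorph1.
rewrite !(mulr0, mul0r, mulr1, addr0, add0r) mulrAC mulrC.
by rewrite (_ : lift ord0 ord0 = 1) //; apply: val_inj.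
Qed.

Lemma riemann_form_hermitian a b : riemann_form b a = (riemann_form a b)^*.
Proof. by rewrite !mxE conjc_real eq_sym; case: eqP => // ->. Qed.

Lemma riemann_form_pos v : v != 0 -> 0 < herm_form riemann_form v v.
Proof.
move=> v_neq0; rewrite herm_riemann_formE -!normCKC.
have c_gt0 : 0 < (r ^- 3)%:C by rewrite ltcR invr_gt0 exprn_gt0.
have : (v 0 0 != 0) || (v 1 0 != 0).
  apply: contraNT v_neq0 => /norP[/negPn/eqP v0 /negPn/eqP v1].
  apply/eqP/matrixP => i j; rewrite (ord1 j) mxE.
  case: i => [[|[|i]] lt_i2] //; [rewrite -v0 | rewrite -v1];
    by congr (v _ _); apply: val_inj.
have sqr_norm_ge0 (x : R[i]) : 0 <= `|x| ^+ 2 by rewrite exprn_ge0.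
case/orP=> [v0_neq0 | v1_neq0].
  by apply: ltr_wpDr; rewrite ?sqr_norm_ge0 ?mulr_gt0 ?exprn_gt0 ?normr_gt0.
by apply: ltr_wpDl; rewrite ?(mulr_ge0 (ltW c_gt0)) ?exprn_gt0 ?normr_gt0.
Qed.

Lemma Im_riemann_form_lattice c d :
  complex.Im (herm_form riemann_form (lattice_vec r c) (lattice_vec r d)) =
  minor2 c d o0 o2 + minor2 c d o1 o3.
Proof.
rewrite herm_riemann_formE !lattice_vec_coord0 !lattice_vec_coord1 /minor2 /=.
by field; rewrite gt_eqF.
Qed.

Lemma period_matrix_polarization : has_polarization (period_matrix r).
Proof.
exists riemann_form; split; first exact: riemann_form_hermitian.
split; first exact: riemann_form_pos.
move=> _ _ [k ->] [n ->]; rewrite -!lattice_vec_int -complexIm Im_riemann_form_lattice.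
by exists (minor2 k n o0 o2 + minor2 k n o1 o3); rewrite !minor2_intr -intrD rmorph_int.
Qed.

End PositiveParameter.

Section Simplicity.
Variables (R : realType) (r : R).
Hypothesis r_indep : forall q : 'I_4 -> rat,
  \sum_(k < 4) ratr (q k) * r ^+ k = 0 -> forall k, q k = 0.

Lemma int_cubic_eq0 (z0 z1 z2 z3 : int) :
    z0%:~R + z1%:~R * r + z2%:~R * r ^+ 2 + z3%:~R * r ^+ 3 = 0 ->
  [/\ z0 = 0, z1 = 0, z2 = 0 & z3 = 0].
Proof.
move=> rel.
have q_eq0 : forall j : 'I_4, ([:: z0; z1; z2; z3]`_j)%:~R = 0 :> rat.
  apply: r_indep; rewrite -[RHS]rel !big_ord_recl big_ord0 /= !ratr_int.
  by rewrite expr0 expr1 mulr1 addr0 !addrA.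
by split; apply/eqP; rewrite -(intr_eq0 rat) ?(q_eq0 o0, q_eq0 o1, q_eq0 o2, q_eq0 o3).
Qed.

Lemma lattice_minors_eq0 (k n : 'I_4 -> int) :
    let u := lattice_vec r (fun j => (k j)%:~R) in
    let v := lattice_vec r (fun j => (n j)%:~R) in
    u 0 0 * v 1 0 = u 1 0 * v 0 0 ->
  forall i j, minor2 k n i j = 0.
Proof.
move=> u v cross; set p := minor2 k n.
have /eqP := lattice_vec_cross r (fun j => (k j)%:~R) (fun j => (n j)%:~R).
rewrite -/u -/v cross subrr !minor2_intr eq_complex /= => /andP[/eqP re /eqP im].
have [p01 p0213 p23 _] := int_cubic_eq0 (z0 := p o0 o1) (z1 := p o0 o2 - p o1 o3)
  (z2 := - p o2 o3) (z3 := - p o2 o3) ltac:(by rewrite [RHS]re intrB !intrN; ring).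
have [p03 _ _ p12] := int_cubic_eq0 (z0 := p o0 o3) (z1 := 0) (z2 := 0) (z3 := - p o1 o2)
  ltac:(by rewrite [RHS]im intrN; ring).
move/eqP: p23; rewrite oppr_eq0 => /eqP p23.
move/eqP: p12; rewrite oppr_eq0 => /eqP p12.
move/eqP: p0213; rewrite subr_eq0 => /eqP p13.
have p02 : p o0 o2 = 0.
  have /eqP := minor2_plucker k n o0 o1 o2 o3.
  by rewrite -/p p01 p23 p03 p12 -p13 mul0r addr0 mulf_eq0 orbb => /eqP.
rewrite p02 in p13.
have p_antisym i j : p j i = 0 -> p i j = 0.
  by rewrite /p minor2C => /eqP; rewrite oppr_eq0 => /eqP.
by apply: forall_ord4; apply: forall_ord4; rewrite /p ?minor2ii //; apply: p_antisym.
Qed.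

Lemma period_matrix_no_1dim_subtorus : ~ has_1dim_subtorus (period_matrix r).
Proof.
move=> [w [a [b [w_neq0 [[k ak] [[n bn] ab_indep]]]]]].
rewrite -lattice_vec_int in ak; rewrite -lattice_vec_int in bn.
have minors_eq0 i j : minor2 (fun l => (k l)%:~R : R) (fun l => (n l)%:~R) i j = 0.
  by rewrite minor2_intr lattice_minors_eq0 // -ak -bn !mxE; ring.
have [s [t [st_neq0 rel]]] := minor2_eq0_dependent minors_eq0.
have : (s%:C * a + t%:C * b) *: w = 0.
  by rewrite scalerDl -!scalerA ak bn; exact: lattice_vec_relation.
move/eqP; rewrite scaler_eq0 (negbTE w_neq0) orbF => /eqP /ab_indep [s0 t0].
by move: st_neq0; rewrite s0 t0 eqxx.
Qed.

End Simplicity.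

Theorem lemma2 (R : realType) (r : R) (hr : 0 < r)
  (hind : forall q : 'I_4 -> rat,
     \sum_(k < 4) ratr (q k) * r ^+ k = 0 -> forall k, q k = 0) :
  simple_abelian_surface (period_matrix r).
Proof.
split; first exact: period_matrix_columns_R_independent.
split; first exact: period_matrix_polarization.
exact: period_matrix_no_1dim_subtorus.
Qed.
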